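(* Let $(\mathcal{C},\mathbb{E},\mathfrak{s})$ be an extriangulated category and $\mathcal{I}$ an ideal of $\mathcal{C}$. Consider the statements: (a) there is an additive subfunctor $\mathbb{F}\subseteq\mathbb{E}$ having enough injective morphisms with $\mathcal{I}=\mathrm{Ph}(\mathbb{F})$; (a') there is an additive subfunctor $\mathbb{F}\subseteq\mathbb{E}$ having enough special injective morphisms with $\mathcal{I}=\mathrm{Ph}(\mathbb{F})$; (b) $\mathcal{I}$ is a special precovering ideal; (c) $(\mathcal{I},\mathcal{I}^{\perp_{\mathbb{E}}})$ is a complete $\mathbb{E}$-cotorsion pair; (d) the additive subfunctor $\mathcal{I}^\star\subseteq\mathbb{E}$ has enough special injective morphisms and $\mathcal{I}=\mathrm{Ph}(\mathcal{I}^\star)$. Then: (I) if $\mathcal{C}$ has enough projective morphisms, (a) (and hence (a')) implies (b); (II) if $\mathcal{C}$ has enough injective objects, (b) implies (c); (III) (c) implies (d); (IV) (d) implies (a').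
   Context: An extriangulated category $(\mathcal{C},\mathbb{E},\mathfrak{s})$ (Nakaoka–Palu): additive $\mathcal{C}$, biadditive $\mathbb{E}:\mathcal{C}^{\mathrm{op}}\times\mathcal{C}\to\mathrm{Ab}$, additive realization $\mathfrak{s}$ assigning to each $\delta\in\mathbb{E}(C,A)$ an equivalence class of sequences $A\to B\to C$, forming $\mathbb{E}$-triangles $A\to B\to C\overset{\delta}{\dashrightarrow}$, satisfying (ET1)–(ET4), (ET3)$^{\mathrm{op}}$, (ET4)$^{\mathrm{op}}$. Notation $a_\star\delta=\mathbb{E}(C,a)(\delta)$, $c^\star\delta=\mathbb{E}(c,A)(\delta)$; a morphism of $\mathbb{E}$-triangles is a commuting triple $(a,b,c)$ with $a_\star\delta=c^\star\delta'$. An ideal: class of morphisms with zeros, closed under sums and two-sided composition. Additive subfunctor $\mathbb{F}$: subgroups $\mathbb{F}(C,A)\subseteq\mathbb{E}(C,A)$ stable under $a_\star,c^\star$; $\mathbb{F}$-triangles have extension in $\mathbb{F}$. $\mathrm{Ph}(\mathbb{F})$: morphisms $\varphi:X\to C$ with $\varphi^\star\delta\in\mathbb{F}(X,A)$ for all $\delta\in\mathbb{E}(C,A)$. $\mathbb{F}\text{-}\mathrm{inj}$: morphisms $i:A\to Y$ with $i_\star\delta=0$ for all $\delta\in\mathbb{F}(C,A)$. $\mathcal{I}^\star(X,A)=\{i^\star\delta\mid i\in\mathcal{I}(X,C),\ \delta\in\mathbb{E}(C,A)\}$. $\mathbb{F}$ has enough injective morphisms: every $A$ admits an $\mathbb{F}$-triangle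 $A\xrightarrow{e}B\to C\overset{\delta}{\dashrightarrow}$ with $e\in\mathbb{F}\text{-}\mathrm{inj}$; enough special injective morphisms: moreover there is an $\mathbb{E}$-triangle $A\to B'\to C'\overset{\delta'}{\dashrightarrow}$ and a morphism of $\mathbb{E}$-triangles $(\mathrm{id}_A,b,\varphi)$ from the former to it with $\varphi\in\mathrm{Ph}(\mathbb{F})$. $\mathcal{C}$ has enough projective morphisms: every $C$ admits an $\mathbb{E}$-triangle $K\to P\xrightarrow{p}C\overset{\gamma}{\dashrightarrow}$ with $p^\star\delta=0$ for all $\delta\in\mathbb{E}(C,A)$; enough injective objects: every $A$ admits an $\mathbb{E}$-triangle $A\to E\to C\overset{\delta}{\dashrightarrow}$ with $\mathbb{E}(-,E)=0$. $\mathcal{M}^{\perp_{\mathbb{E}}}=\{g:A\to Y\mid m^\star g_\star\delta=0\ \forall m\in\mathcal{M},\,m:X\to C,\ \forall\delta\in\mathbb{E}(C,A)\}$; ${}^{\perp_{\mathbb{E}}}\mathcal{M}=\{g:X\to C\mid g^\star m_\star\delta=0\ \forall m\in\mathcal{M},\,m:A\to Y,\ \forall\delta\in\mathbb{E}(C,A)\}$. $\mathbb{E}$-cotorsion pair: ideals with $\mathcal{I}={}^{\perp_{\mathbb{E}}}\mathcal{J}$, $\mathcal{J}=\mathcal{I}^{\perp_{\mathbb{E}}}$; complete if $\mathcal{I}$ is special precovering and $\mathcal{J}$ special preenveloping. Special $\mathcal{I}$-precover of $C$: $i:X\to C$ in $\mathcal{I}$ with $\mathbb{E}$-triangles $A\to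 B\to C\overset{\delta}{\dashrightarrow}$, $A'\to X\xrightarrow{i}C\overset{\delta'}{\dashrightarrow}$ and a morphism $(j,b,\mathrm{id}_C)$ between them, $j\in\mathcal{I}^{\perp_{\mathbb{E}}}$. Special $\mathcal{J}$-preenvelope of $A$: $e:A\to X$ in $\mathcal{J}$ with $\mathbb{E}$-triangles $A\xrightarrow{e}X\to Y\overset{\delta}{\dashrightarrow}$, $A\to B\to C\overset{\delta'}{\dashrightarrow}$ and a morphism $(\mathrm{id}_A,b,j)$, $j\in{}^{\perp_{\mathbb{E}}}\mathcal{J}$. Special precovering/preenveloping ideal: every object has one. *)

From HB Require Import structures.
From mathcomp Require Import all_boot all_algebra.
Unset Printing Implicit Defensive.
Import GRing.Theory.
Local Open Scope ring_scope.

Record precat := Precat {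
  Ob : Type;
  Hom : Ob -> Ob -> zmodType;
  cmp : forall X Y Z : Ob, Hom Y Z -> Hom X Y -> Hom X Z;  (* cmp g f = g o f *)
  idm : forall X : Ob, Hom X X
}.
Arguments Hom {p} X Y.
Arguments cmp {p X Y Z} g f.
Arguments idm {p} X.

Section AddCat.
Context {p : precat}.

Definition is_iso {X Y : Ob p} (f : Hom X Y) : Prop :=
  exists g : Hom Y X, cmp g f = idm X /\ cmp f g = idm Y.

Definition is_biprod {A B S : Ob p} (i1 : Hom A S) (i2 : Hom B S)
    (p1 : Hom S A) (p2 : Hom S B) : Prop :=
  [/\ cmp p1 i1 = idm A, cmp p2 i2 = idm B, cmp p1 i2 = 0, cmp p2 i1 = 0
    & cmp i1 p1 + cmp i2 p2 = idm S].

Record is_additive : Prop := {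
  cmpA : forall (X Y Z W : Ob p) (h : Hom Z W) (g : Hom Y Z) (f : Hom X Y),
      cmp h (cmp g f) = cmp (cmp h g) f;
  cmp1l : forall (X Y : Ob p) (f : Hom X Y), cmp (idm Y) f = f;
  cmp1r : forall (X Y : Ob p) (f : Hom X Y), cmp f (idm X) = f;
  cmpDl : forall (X Y Z : Ob p) (g g' : Hom Y Z) (f : Hom X Y),
      cmp (g + g') f = cmp g f + cmp g' f;
  cmpDr : forall (X Y Z : Ob p) (g : Hom Y Z) (f f' : Hom X Y),
      cmp g (f + f') = cmp g f + cmp g f';
  zero_obj : exists Z : Ob p, idm Z = 0;
  biprod_ex : forall A B : Ob p, exists (S : Ob p) (i1 : Hom A S) (i2 : Hom B S)
      (p1 : Hom S A) (p2 : Hom S B), is_biprod i1 i2 p1 p2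
}.

Definition seq_equiv {A B B' C : Ob p} (x : Hom A B) (y : Hom B C)
    (x' : Hom A B') (y' : Hom B' C) : Prop :=
  exists b : Hom B B', is_iso b /\ cmp b x = x' /\ cmp y' b = y.

Definition mor_sum {A A' SA B B' SB : Ob p} (pA1 : Hom SA A) (pA2 : Hom SA A')
    (iB1 : Hom B SB) (iB2 : Hom B' SB) (f : Hom A B) (g : Hom A' B') : Hom SA SB :=
  cmp iB1 (cmp f pA1) + cmp iB2 (cmp g pA2).
End AddCat.

(* real d x y  <->  the sequence A -x-> B -y-> C belongs to s(d)        *)
Record extri_data (p : precat) := ExtriData {
  Ext : Ob p -> Ob p -> zmodType;   (* Ext C A = E(C,A) *)
  pull : forall C' C A : Ob p, Hom C' C -> Ext C A -> Ext C' A;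
  push : forall C A A' : Ob p, Hom A A' -> Ext C A -> Ext C A';
  real : forall A C : Ob p, Ext C A -> forall B : Ob p, Hom A B -> Hom B C -> Prop
}.
Arguments Ext {p} e C A.
Arguments pull {p e C' C A} c d.
Arguments push {p e C A A'} a d.
Arguments real {p e A C} d {B} x y.

Section Extri.
Context {p : precat} (Ee : extri_data p).

Definition ext_sum {A A' SA C C' SC : Ob p} (iA1 : Hom A SA) (iA2 : Hom A' SA)
    (pC1 : Hom SC C) (pC2 : Hom SC C') (d : Ext Ee C A) (d' : Ext Ee C' A')
    : Ext Ee SC SA :=
  push iA1 (pull pC1 d) + push iA2 (pull pC2 d').

Definition tri_morph {A B C A' B' C' : Ob p}
    (d : Ext Ee C A) (x : Hom A B) (y : Hom B C)
    (d' : Ext Ee C' A') (x' : Hom A' B') (y' : Hom B' C')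
    (a : Hom A A') (b : Hom B B') (c : Hom C C') : Prop :=
  [/\ cmp b x = cmp x' a, cmp c y = cmp y' b & push a d = pull c d'].

Record is_extriangulated : Prop := {
  ex_additive : @is_additive p;
  pull_id : forall (C A : Ob p) (d : Ext Ee C A), pull (idm C) d = d;
  pull_comp : forall (C'' C' C A : Ob p) (c : Hom C' C) (c' : Hom C'' C')
      (d : Ext Ee C A), pull (cmp c c') d = pull c' (pull c d);
  push_id : forall (C A : Ob p) (d : Ext Ee C A), push (idm A) d = d;
  push_comp : forall (C A A' A'' : Ob p) (a : Hom A A') (a' : Hom A' A'')
      (d : Ext Ee C A), push (cmp a' a) d = push a' (push a d);
  push_pull : forall (C' C A A' : Ob p) (c : Hom C' C) (a : Hom A A')
      (d : Ext Ee C A), push a (pull c d) = pull c (push a d);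
  pull_addE : forall (C' C A : Ob p) (c : Hom C' C) (d d' : Ext Ee C A),
      pull c (d + d') = pull c d + pull c d';
  pull_addM : forall (C' C A : Ob p) (c c' : Hom C' C) (d : Ext Ee C A),
      pull (c + c') d = pull c d + pull c' d;
  push_addE : forall (C A A' : Ob p) (a : Hom A A') (d d' : Ext Ee C A),
      push a (d + d') = push a d + push a d';
  push_addM : forall (C A A' : Ob p) (a a' : Hom A A') (d : Ext Ee C A),
      push (a + a') d = push a d + push a' d;
  real_ex : forall (A C : Ob p) (d : Ext Ee C A),
      exists (B : Ob p) (x : Hom A B) (y : Hom B C), real d x y;
  real_class : forall (A B B' C : Ob p) (d : Ext Ee C A) (x : Hom A B) (y : Hom B C)
      (x' : Hom A B') (y' : Hom B' C),
      real d x y -> (real d x' y' <-> seq_equiv x y x' y');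
  real_morph : forall (A B C A' B' C' : Ob p) (d : Ext Ee C A) (x : Hom A B)
      (y : Hom B C) (d' : Ext Ee C' A') (x' : Hom A' B') (y' : Hom B' C')
      (a : Hom A A') (c : Hom C C'),
      real d x y -> real d' x' y' -> push a d = pull c d' ->
      exists b : Hom B B', cmp b x = cmp x' a /\ cmp c y = cmp y' b;
  real_zero : forall (A C S : Ob p) (i1 : Hom A S) (i2 : Hom C S)
      (p1 : Hom S A) (p2 : Hom S C), is_biprod i1 i2 p1 p2 ->
      real (0 : Ext Ee C A) i1 p2;
  real_sum : forall (A A' SA B B' SB C C' SC : Ob p)
      (iA1 : Hom A SA) (iA2 : Hom A' SA) (pA1 : Hom SA A) (pA2 : Hom SA A')
      (iB1 : Hom B SB) (iB2 : Hom B' SB) (pB1 : Hom SB B) (pB2 : Hom SB B')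
      (iC1 : Hom C SC) (iC2 : Hom C' SC) (pC1 : Hom SC C) (pC2 : Hom SC C')
      (d : Ext Ee C A) (d' : Ext Ee C' A')
      (x : Hom A B) (y : Hom B C) (x' : Hom A' B') (y' : Hom B' C'),
      is_biprod iA1 iA2 pA1 pA2 -> is_biprod iB1 iB2 pB1 pB2 ->
      is_biprod iC1 iC2 pC1 pC2 ->
      real d x y -> real d' x' y' ->
      real (ext_sum iA1 iA2 pC1 pC2 d d') (mor_sum pA1 pA2 iB1 iB2 x x')
           (mor_sum pB1 pB2 iC1 iC2 y y');
  ET3 : forall (A B C A' B' C' : Ob p) (d : Ext Ee C A) (x : Hom A B)
      (y : Hom B C) (d' : Ext Ee C' A') (x' : Hom A' B') (y' : Hom B' C')
      (a : Hom A A') (b : Hom B B'),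
      real d x y -> real d' x' y' -> cmp b x = cmp x' a ->
      exists c : Hom C C', cmp c y = cmp y' b /\ push a d = pull c d';
  ET3op : forall (A B C A' B' C' : Ob p) (d : Ext Ee C A) (x : Hom A B)
      (y : Hom B C) (d' : Ext Ee C' A') (x' : Hom A' B') (y' : Hom B' C')
      (b : Hom B B') (c : Hom C C'),
      real d x y -> real d' x' y' -> cmp c y = cmp y' b ->
      exists a : Hom A A', cmp b x = cmp x' a /\ push a d = pull c d';
  ET4 : forall (A B C D F : Ob p) (d : Ext Ee D A) (d' : Ext Ee F B)
      (f : Hom A B) (f' : Hom B D) (g : Hom B C) (g' : Hom C F),
      real d f f' -> real d' g g' ->
      exists (E : Ob p) (h : Hom A C) (h' : Hom C E) (dd : Hom D E) (e : Hom E F)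
        (d'' : Ext Ee E A),
        [/\ h = cmp g f, cmp h' g = cmp dd f' & cmp e h' = g'] /\
        [/\ real d'' h h', real (push f' d') dd e, pull dd d'' = d
           & push f d'' = pull e d'];
  ET4op : forall (D A B F C : Ob p) (d : Ext Ee B D) (d' : Ext Ee C F)
      (f' : Hom D A) (f : Hom A B) (g' : Hom F B) (g : Hom B C),
      real d f' f -> real d' g' g ->
      exists (E : Ob p) (dd : Hom D E) (e : Hom E F) (h' : Hom E A) (h : Hom A C)
        (d'' : Ext Ee C E),
        [/\ cmp h' dd = f', cmp f h' = cmp g' e & h = cmp g f] /\
        [/\ real d'' h' h, real (pull g' d) dd e, d' = push e d''
           & push dd d = pull g d'']
}.

Definition mor_class := forall X Y : Ob p, Hom X Y -> Prop.
Definition ext_class := forall C A : Ob p, Ext Ee C A -> Prop.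

Definition same_class (I J : mor_class) : Prop :=
  forall (X Y : Ob p) (f : Hom X Y), I X Y f <-> J X Y f.

Definition is_ideal (I : mor_class) : Prop :=
  [/\ forall X Y : Ob p, I X Y 0,
      forall (X Y : Ob p) (f g : Hom X Y), I X Y f -> I X Y g -> I X Y (f + g),
      forall (X Y Z : Ob p) (g : Hom Y Z) (f : Hom X Y), I X Y f -> I X Z (cmp g f)
    & forall (X Y Z : Ob p) (g : Hom Y Z) (f : Hom X Y), I Y Z g -> I X Z (cmp g f)].

Definition is_add_subfunctor (F : ext_class) : Prop :=
  [/\ forall C A : Ob p, F C A 0,
      forall (C A : Ob p) (d d' : Ext Ee C A), F C A d -> F C A d' -> F C A (d - d'),
      forall (C' C A : Ob p) (c : Hom C' C) (d : Ext Ee C A), F C A d -> F C' A (pull c d)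
    & forall (C A A' : Ob p) (a : Hom A A') (d : Ext Ee C A), F C A d -> F C A' (push a d)].

Definition Ph (F : ext_class) : mor_class :=
  fun X C phi => forall (A : Ob p) (d : Ext Ee C A), F X A (pull phi d).

Definition Finj (F : ext_class) : mor_class :=
  fun A Y i => forall (C : Ob p) (d : Ext Ee C A), F C A d -> push i d = 0.

Definition Istar (I : mor_class) : ext_class :=
  fun X A t => exists (C : Ob p) (i : Hom X C) (d : Ext Ee C A), I X C i /\ t = pull i d.

Definition perpR (M : mor_class) : mor_class :=
  fun A Y g => forall (X C : Ob p) (m : Hom X C), M X C m ->
    forall d : Ext Ee C A, pull m (push g d) = 0.

Definition perpL (M : mor_class) : mor_class :=
  fun X C g => forall (A Y : Ob p) (m : Hom A Y), M A Y m ->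
    forall d : Ext Ee C A, pull g (push m d) = 0.

Definition enough_inj_morphisms (F : ext_class) : Prop :=
  forall A : Ob p, exists (B C : Ob p) (e : Hom A B) (y : Hom B C) (d : Ext Ee C A),
    [/\ F C A d, real d e y & Finj F A B e].

Definition enough_special_inj_morphisms (F : ext_class) : Prop :=
  forall A : Ob p, exists (B C : Ob p) (e : Hom A B) (y : Hom B C) (d : Ext Ee C A),
    [/\ F C A d, real d e y, Finj F A B e &
      exists (B' C' : Ob p) (x' : Hom A B') (y' : Hom B' C') (d' : Ext Ee C' A)
             (b : Hom B B') (phi : Hom C C'),
        [/\ real d' x' y', tri_morph d e y d' x' y' (idm A) b phi & Ph F C C' phi]].

Definition enough_proj_morphisms : Prop :=
  forall C : Ob p, exists (K P : Ob p) (x : Hom K P) (q : Hom P C) (g : Ext Ee C K),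
    real g x q /\ forall (A : Ob p) (d : Ext Ee C A), pull q d = 0.

Definition enough_inj_objects : Prop :=
  forall A : Ob p, exists (E0 C : Ob p) (x : Hom A E0) (y : Hom E0 C) (d : Ext Ee C A),
    real d x y /\ forall (X : Ob p) (t : Ext Ee X E0), t = 0.

Definition special_precover (I : mor_class) (X C : Ob p) (i : Hom X C) : Prop :=
  I X C i /\
  exists (A B : Ob p) (x : Hom A B) (y : Hom B C) (d : Ext Ee C A)
         (A' : Ob p) (x' : Hom A' X) (d' : Ext Ee C A') (j : Hom A A') (b : Hom B X),
    [/\ real d x y, real d' x' i, tri_morph d x y d' x' i j b (idm C)
      & perpR I A A' j].

Definition special_precovering (I : mor_class) : Prop :=
  forall C : Ob p, exists (X : Ob p) (i : Hom X C), special_precover I X C i.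

Definition special_preenvelope (J : mor_class) (A X : Ob p) (e : Hom A X) : Prop :=
  J A X e /\
  exists (Y : Ob p) (y : Hom X Y) (d : Ext Ee Y A) (B C : Ob p) (x' : Hom A B)
         (y' : Hom B C) (d' : Ext Ee C A) (b : Hom X B) (j : Hom Y C),
    [/\ real d e y, real d' x' y', tri_morph d e y d' x' y' (idm A) b j
      & perpL J Y C j].

Definition special_preenveloping (J : mor_class) : Prop :=
  forall A : Ob p, exists (X : Ob p) (e : Hom A X), special_preenvelope J A X e.

Definition cotorsion_pair (I J : mor_class) : Prop :=
  [/\ is_ideal I, is_ideal J, same_class I (perpL J) & same_class J (perpR I)].

Definition complete_cotorsion_pair (I J : mor_class) : Prop :=
  [/\ cotorsion_pair I J, special_precovering I & special_preenveloping J].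

Definition cond_a (I : mor_class) : Prop :=
  exists F : ext_class,
    [/\ is_add_subfunctor F, enough_inj_morphisms F & same_class I (Ph F)].

Definition cond_a' (I : mor_class) : Prop :=
  exists F : ext_class,
    [/\ is_add_subfunctor F, enough_special_inj_morphisms F & same_class I (Ph F)].

Definition cond_d (I : mor_class) : Prop :=
  enough_special_inj_morphisms (Istar I) /\ same_class I (Ph (Istar I)).

End Extri.

(* Everything rests on the exactness of the sequences attached to an
   E-triangle A -x-> B -y-> C -d->: a morphism g into C lifts along y iff
   g^* d = 0, a morphism a out of A extends along x iff a_* d = 0, and an
   extension t of A satisfies x_* t = 0 iff t = f^* d for some f.
   (I) Take a triangle K -> P -q-> C -g-> with q a projective morphism and an
   F-injective inflation e of K in an F-triangle; the deflation i of the
   pushout e_* g is the special precover. It is F-phantom: every extension of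
   C is h_* g since q^* kills it, e_A h factors through e when e_A is the
   F-injective inflation of A, hence e_A kills i^* h_* g, which is therefore
   pulled back from an F-extension.
   (II) A special preenvelope of A is the pullback, along a special precover
   i of C, of a triangle A -> E -> C with E injective: every extension of A
   is f^* of that triangle, and for m in I the composite f m factors through
   i, which makes the pulled-back inflation I-orthogonal. The same
   factorisation through i shows perpL (perpR I) ⊆ I.
   (III) and (IV) rest on Finj (Istar I) = perpR I and
   I ⊆ Ph (Istar I) ⊆ perpL (perpR I). *)

From Pilot Require Import Defs.
From mathcomp Require Import all_boot all_algebra.
Import GRing.Theory Defs.
Local Open Scope ring_scope.

Arguments pull_id {p Ee} i {C A} d.
Arguments pull_comp {p Ee} i {C'' C' C A} c c' d.
Arguments push_id {p Ee} i {C A} d.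
Arguments push_comp {p Ee} i {C A A' A''} a a' d.
Arguments push_pull {p Ee} i {C' C A A'} c a d.
Arguments pull_addE {p Ee} i {C' C A} c d d'.
Arguments push_addE {p Ee} i {C A A'} a d d'.
Arguments push_addM {p Ee} i {C A A'} a a' d.
Arguments real_ex {p Ee} i {A C} d.
Arguments real_morph {p Ee} i {A B C A' B' C' d x y d' x' y'} a c _ _ _.
Arguments real_zero {p Ee} i {A C S i1 i2 p1 p2} _.
Arguments ET3 {p Ee} i {A B C A' B' C' d x y d' x' y'} a b _ _ _.
Arguments ET3op {p Ee} i {A B C A' B' C' d x y d' x' y'} b c _ _ _.
Arguments ex_additive {p Ee} i.
Arguments cmpA {p} i {X Y Z W} h g f.
Arguments cmp1l {p} i {X Y} f.
Arguments cmp1r {p} i {X Y} f.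
Arguments cmpDl {p} i {X Y Z} g g' f.
Arguments cmpDr {p} i {X Y Z} g f f'.
Arguments biprod_ex {p} i A B.

Lemma additive_map0 (U V : zmodType) (f : U -> V) :
  (forall a b, f (a + b) = f a + f b) -> f 0 = 0.
Proof. by move=> fD; apply: (addrI (f 0)); rewrite -fD !addr0. Qed.

Lemma cmp0l {p : precat} (HA : @is_additive p) (X Y Z : Ob p) (f : Hom X Y) :
  cmp (0 : Hom Y Z) f = 0.
Proof. exact: (@additive_map0 _ _ (cmp^~ f) (fun g g' => cmpDl HA g g' f)). Qed.

Section Extriangulated.
Context {p : precat} {Ee : extri_data p} (HE : is_extriangulated Ee).
Let HA := ex_additive HE.

Lemma pull0E (C' C A : Ob p) (c : Hom C' C) : pull c (0 : Ext Ee C A) = 0.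
Proof. exact: additive_map0 (pull_addE HE c). Qed.

Lemma push0E (C A A' : Ob p) (a : Hom A A') : push a (0 : Ext Ee C A) = 0.
Proof. exact: additive_map0 (push_addE HE a). Qed.

Lemma push0M (C A A' : Ob p) (d : Ext Ee C A) : push (0 : Hom A A') d = 0.
Proof. exact: (@additive_map0 _ _ (push^~ d) (fun a a' => push_addM HE a a' d)). Qed.

Lemma pullBE (C' C A : Ob p) (c : Hom C' C) (d d' : Ext Ee C A) :
  pull c (d - d') = pull c d - pull c d'.
Proof. by rewrite -{2}(subrK d' d) (pull_addE HE c (d - d')) addrK. Qed.

Section Triangle.
Context {A B C : Ob p} {d : Ext Ee C A} {x : Hom A B} {y : Hom B C}.
Hypothesis Hd : real d x y.

Lemma real_push_infl : push x d = 0.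
Proof.
have [S [i1 [i2 [p1 [p2 Hb]]]]] := biprod_ex HA B C.
have [c [_ ->]] := ET3 HE x i1 Hd (real_zero HE Hb) (erefl (cmp i1 x)).
exact: pull0E.
Qed.

Lemma real_pull_defl : pull y d = 0.
Proof.
have [S [i1 [i2 [p1 [p2 Hb]]]]] := biprod_ex HA A B.
have [a [_ <-]] := ET3op HE p2 y (real_zero HE Hb) Hd (erefl (cmp y p2)).
exact: push0E.
Qed.

Lemma real_factor_defl {X : Ob p} (g : Hom X C) :
  pull g d = 0 -> exists h : Hom X B, g = cmp y h.
Proof.
move=> Hg; have [S [i1 [i2 [p1 [p2 Hb]]]]] := biprod_ex HA A X.
have [|b [_ Hyb]] := real_morph HE (idm A) g (real_zero HE Hb) Hd.
  by rewrite push0E Hg.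
case: Hb => _ Hp2i2 _ _ _; exists (cmp b i2).
by rewrite (cmpA HA) -Hyb -(cmpA HA) Hp2i2 (cmp1r HA).
Qed.

Lemma real_factor_infl {Z : Ob p} (g : Hom A Z) :
  push g d = 0 -> exists h : Hom B Z, g = cmp h x.
Proof.
move=> Hg; have [S [i1 [i2 [p1 [p2 Hb]]]]] := biprod_ex HA Z C.
have [|b [Hbx _]] := real_morph HE g (idm C) Hd (real_zero HE Hb).
  by rewrite Hg pull0E.
case: Hb => Hp1i1 _ _ _ _; exists (cmp p1 b).
by rewrite -(cmpA HA) Hbx (cmpA HA) Hp1i1 (cmp1l HA).
Qed.

End Triangle.

Lemma push_infl0_pull {A B C W : Ob p} {d : Ext Ee C A} {x : Hom A B} {y : Hom B C}
    (t : Ext Ee W A) :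
  real d x y -> push x t = 0 -> exists f : Hom W C, t = pull f d.
Proof.
move=> Hd Ht; have [T [tx [ty Ht_real]]] := real_ex HE t.
have [h Hh] := real_factor_infl Ht_real x Ht.
have [|f [_ Hf]] := ET3 HE (idm A) h Ht_real Hd; first by rewrite -Hh (cmp1r HA).
by exists f; rewrite -Hf (push_id HE).
Qed.

Lemma pull_defl0_push {K P C A : Ob p} {g : Ext Ee C K} {x : Hom K P} {q : Hom P C}
    (t : Ext Ee C A) :
  real g x q -> pull q t = 0 -> exists h : Hom K A, t = push h g.
Proof.
move=> Hg Ht; have [T [tx [ty Ht_real]]] := real_ex HE t.
have [b Hb] := real_factor_defl Ht_real q Ht.
have [|h [_ Hh]] := ET3op HE b (idm C) Hg Ht_real; first by rewrite -Hb (cmp1l HA).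
by exists h; rewrite Hh (pull_id HE).
Qed.

Lemma pushout_tri_morph {A B C A' B' : Ob p} {d : Ext Ee C A} {x : Hom A B}
    {y : Hom B C} (a : Hom A A') {x' : Hom A' B'} {y' : Hom B' C} :
  real d x y -> real (push a d) x' y' ->
  exists b : Hom B B', tri_morph Ee d x y (push a d) x' y' a b (idm C).
Proof.
move=> Hd Hd'; have [|b [Hbx Hyb]] := real_morph HE a (idm C) Hd Hd'.
  by rewrite (pull_id HE).
by exists b; split; rewrite ?(pull_id HE).
Qed.

Lemma pullback_tri_morph {A B C B' C' : Ob p} {d : Ext Ee C A} {x : Hom A B}
    {y : Hom B C} (c : Hom C' C) {x' : Hom A B'} {y' : Hom B' C'} :
  real (pull c d) x' y' -> real d x y ->
  exists b : Hom B' B, tri_morph Ee (pull c d) x' y' d x y (idm A) b c.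
Proof.
move=> Hd' Hd; have [|b [Hbx Hyb]] := real_morph HE (idm A) c Hd' Hd.
  by rewrite (push_id HE).
by exists b; split; rewrite ?(push_id HE).
Qed.

Lemma sub_perpL_perpR (M : @mor_class p) {X C : Ob p} (g : Hom X C) :
  M X C g -> perpL Ee (perpR Ee M) X C g.
Proof. by move=> Hg A Y m Hm d; apply: Hm. Qed.

Lemma perpR_ideal (M : @mor_class p) : is_ideal (perpR Ee M).
Proof.
split.
- by move=> A Y X C m Hm d; rewrite push0M pull0E.
- move=> A Y f g Hf Hg X C m Hm d.
  by rewrite (push_addM HE) (pull_addE HE) (Hf _ _ _ Hm) (Hg _ _ _ Hm) addr0.
- move=> A Y Z g f Hf X C m Hm d.
  by rewrite (push_comp HE) -(push_pull HE) (Hf _ _ _ Hm) push0E.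
- move=> A Y Z g f Hg X C m Hm d.
  by rewrite (push_comp HE) (Hg _ _ _ Hm).
Qed.

Lemma Istar_add_subfunctor (I : @mor_class p) :
  is_ideal I -> is_add_subfunctor Ee (Istar Ee I).
Proof.
case=> HI0 HID HIl HIr; split.
- by move=> C A; exists C, 0, 0; rewrite pull0E.
- move=> C A _ _ [C1 [i1 [d1 [Hi1 ->]]]] [C2 [i2 [d2 [Hi2 ->]]]].
  have [S [j1 [j2 [q1 [q2 [H11 H22 H12 H21 _]]]]]] := biprod_ex HA C1 C2.
  exists S, (cmp j1 i1 + cmp j2 i2), (pull q1 d1 - pull q2 d2); split.
    by apply: HID; apply: HIl.
  rewrite pullBE -!(pull_comp HE) !(cmpDr HA) !(cmpA HA) H11 H22 H12 H21.
  by rewrite !(cmp0l HA) addr0 add0r !(cmp1l HA).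
- move=> C' C A c _ [C1 [i1 [d1 [Hi1 ->]]]].
  by exists C1, (cmp i1 c), d1; rewrite (pull_comp HE); split; first exact: HIr.
- move=> C A A' a _ [C1 [i1 [d1 [Hi1 ->]]]].
  by exists C1, i1, (push a d1); rewrite (push_pull HE).
Qed.

Lemma sub_Ph_Istar (I : @mor_class p) {X C : Ob p} (f : Hom X C) :
  I X C f -> Ph Ee (Istar Ee I) X C f.
Proof. by move=> Hf A d; exists C, f, d. Qed.

Lemma Ph_Istar_perpL (I : @mor_class p) {X C : Ob p} (g : Hom X C) :
  Ph Ee (Istar Ee I) X C g -> perpL Ee (perpR Ee I) X C g.
Proof.
move=> Hg A Y m Hm d; rewrite -(push_pull HE).
have [C1 [i [d1 [Hi ->]]]] := Hg A d.
by rewrite (push_pull HE) (Hm _ _ _ Hi).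
Qed.

Lemma perpR_Finj_Istar (I : @mor_class p) {A Y : Ob p} (e : Hom A Y) :
  perpR Ee I A Y e -> Finj Ee (Istar Ee I) A Y e.
Proof.
move=> He C _ [C1 [i [d [Hi ->]]]].
by rewrite (push_pull HE) (He _ _ _ Hi).
Qed.

Lemma Finj_perpR_Ph (F : ext_class Ee) {A Y : Ob p} (e : Hom A Y) :
  Finj Ee F A Y e -> perpR Ee (Ph Ee F) A Y e.
Proof. by move=> He X C m Hm d; rewrite -(push_pull HE); apply: He. Qed.

Lemma enough_special_inj_morphismsW (F : ext_class Ee) :
  enough_special_inj_morphisms Ee F -> enough_inj_morphisms Ee F.
Proof. by move=> Hinj A; have [B [C [e [y [d [? ? ? _]]]]]] := Hinj A; exists B, C, e, y, d. Qed.

Section EnoughInjectiveMorphisms.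
Variable F : ext_class Ee.
Hypothesis HF : is_add_subfunctor Ee F.
Hypothesis Hinj : enough_inj_morphisms Ee F.

Lemma push_infl0_in_F {A B C W : Ob p} {d : Ext Ee C A} {e : Hom A B} {y : Hom B C}
    (t : Ext Ee W A) :
  F C A d -> real d e y -> push e t = 0 -> F W A t.
Proof.
move=> HdF Hd Ht; have [f ->] := push_infl0_pull t Hd Ht.
by case: HF => _ _ HFpull _; apply: HFpull.
Qed.

Lemma Ph_pushout_proj_Finj {K P C B0 C0 X : Ob p} {g : Ext Ee C K} {x : Hom K P}
    {q : Hom P C} {d : Ext Ee C0 K} {e : Hom K B0} {y0 : Hom B0 C0}
    {x' : Hom B0 X} {i : Hom X C} :
  real g x q -> (forall (A : Ob p) (t : Ext Ee C A), pull q t = 0) ->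
  F C0 K d -> real d e y0 -> Finj Ee F K B0 e -> real (push e g) x' i ->
  Ph Ee F X C i.
Proof.
move=> Hg Hq HdF Hd He Hr A t.
have [BA [CA [eA [yA [dA [HdA HrA HeA]]]]]] := Hinj A.
apply: (push_infl0_in_F _ HdA HrA).
have [h ->] := pull_defl0_push t Hg (Hq A t).
have [|k Hk] := real_factor_infl Hd (cmp eA h).
  rewrite (push_comp HE); apply: HeA; by case: HF => _ _ _; apply.
rewrite (push_pull HE) -(push_comp HE) Hk (push_comp HE) -(push_pull HE).
by rewrite (real_pull_defl Hr) push0E.
Qed.

End EnoughInjectiveMorphisms.

Section Ideal.
Variable I : @mor_class p.
Hypothesis HI : is_ideal I.

Lemma special_precovering_of_cond_a :
  enough_proj_morphisms Ee -> cond_a Ee I -> special_precovering Ee I.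
Proof.
move=> Hproj [F [HF Hinj HIF]] C.
have [K [P [x [q [g [Hg Hq]]]]]] := Hproj C.
have [B0 [C0 [e [y0 [d [HdF Hd He]]]]]] := Hinj K.
have [X [x' [i Hr]]] := real_ex HE (push e g).
have [b Hmorph] := pushout_tri_morph e Hg Hr.
exists X, i; split.
  by apply/HIF; exact: (Ph_pushout_proj_Finj _ HF Hinj Hg Hq HdF Hd He Hr).
exists K, P, x, q, g, B0, x', (push e g), e, b; split=> // X2 C2 m /HIF.
exact: Finj_perpR_Ph He X2 C2 m.
Qed.

Lemma special_precovering_of_cond_a' :
  enough_proj_morphisms Ee -> cond_a' Ee I -> special_precovering Ee I.
Proof.
move=> Hproj [F [HF Hinj HIF]]; apply: special_precovering_of_cond_a => //.
by exists F; split=> //; apply: enough_special_inj_morphismsW.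
Qed.

Lemma special_precovering_perpL {X C : Ob p} (g : Hom X C) :
  special_precovering Ee I -> perpL Ee (perpR Ee I) X C g -> I X C g.
Proof.
move=> Hprec Hg.
have [X' [i [HiI [A [B [x [y [d [A' [x' [d' [j [b [Hd Hd' [_ _ Hjd] Hj]]]]]]]]]]]]]] :=
  Hprec C.
rewrite (pull_id HE) in Hjd.
have [|h ->] := real_factor_defl Hd' g; first by rewrite -Hjd; apply: Hg Hj d.
by case: HI => _ _ _; apply.
Qed.

Lemma special_preenveloping_perpR :
  enough_inj_objects Ee -> special_precovering Ee I ->
  special_preenveloping Ee (perpR Ee I).
Proof.
move=> Hinj Hprec A.
have [E0 [C [x [y [d0 [Hd0 HE0]]]]]] := Hinj A.
have [X [i [HiI [A1 [B1 [x1 [y1 [d1 [A2 [x2 [d2 [j [b [Hd1 Hd2 [_ _ Hjd] Hj]]]]]]]]]]]]]] :=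
  Hprec C.
rewrite (pull_id HE) in Hjd.
have [M [e [z Hr]]] := real_ex HE (pull i d0).
have [b' Hmorph] := pullback_tri_morph i Hr Hd0.
exists M, e; split; last first.
  exists X, z, (pull i d0), E0, C, x, y, d0, b', i; split=> //.
  exact: sub_perpL_perpR.
move=> X2 C2 m Hm t.
have [f ->] := push_infl0_pull t Hd0 (HE0 _ _).
have [|g' Hg'] := real_factor_defl Hd2 (cmp f m).
  by rewrite -Hjd (pull_comp HE) -(push_pull HE) (Hj _ _ m Hm).
rewrite (push_pull HE) -(pull_comp HE) Hg' (pull_comp HE) -(push_pull HE).
by rewrite (real_push_infl Hr) pull0E.
Qed.

Lemma complete_cotorsion_of_special_precovering :
  enough_inj_objects Ee -> special_precovering Ee I ->
  complete_cotorsion_pair Ee I (perpR Ee I).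
Proof.
move=> Hinj Hprec; split=> //; last exact: special_preenveloping_perpR.
split=> //; first exact: perpR_ideal.
by move=> X C g; split; [apply: sub_perpL_perpR | apply: special_precovering_perpL].
Qed.

Lemma cond_d_of_complete_cotorsion :
  complete_cotorsion_pair Ee I (perpR Ee I) -> cond_d Ee I.
Proof.
case=> [[_ _ HIJ _] _ Henv].
have HIPh : same_class I (Ph Ee (Istar Ee I)).
  move=> X C g; split; first exact: sub_Ph_Istar.
  by move/Ph_Istar_perpL/HIJ.
split=> // A.
have [X [e [He [Y [y [d [B [C [x' [y' [d' [b [j [Hd Hd' Hm Hj]]]]]]]]]]]]]] :=
  Henv A.
have HjI : I Y C j by apply/HIJ.
have [_ _ Hjd] := Hm.
exists X, Y, e, y, d; split=> //.
- by exists C, j, d'; rewrite -Hjd (push_id HE).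
- exact: perpR_Finj_Istar.
- by exists B, C, x', y', d', b, j; split=> //; apply: sub_Ph_Istar.
Qed.

Lemma cond_a'_of_cond_d : cond_d Ee I -> cond_a' Ee I.
Proof. by case=> Hinj HIPh; exists (Istar Ee I); split=> //; apply: Istar_add_subfunctor. Qed.

End Ideal.

End Extriangulated.

Theorem theorem4p5 (p : precat) (Ee : extri_data p)
    (HE : is_extriangulated Ee) (I : @mor_class p) (HI : is_ideal I) :
  [/\ (enough_proj_morphisms Ee ->
         (cond_a Ee I -> special_precovering Ee I) /\
         (cond_a' Ee I -> special_precovering Ee I)),
      (enough_inj_objects Ee -> special_precovering Ee I ->
         complete_cotorsion_pair Ee I (perpR Ee I)),
      (complete_cotorsion_pair Ee I (perpR Ee I) -> cond_d Ee I)
    & (cond_d Ee I -> cond_a' Ee I)].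
Proof.
split.
- by move=> Hproj; split; [apply: special_precovering_of_cond_a |
                           apply: special_precovering_of_cond_a'].
- exact: complete_cotorsion_of_special_precovering.
- exact: cond_d_of_complete_cotorsion.
- exact: cond_a'_of_cond_d.
Qed.
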